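(* For every integer $n\ge 1$, \[ \mathrm{Od}(n!)=(-1)^{D(n)+\nu(\lfloor n/4\rfloor)}. \]
   Context: For $n\ge 1$ write $n=2^{v}o$ with $o$ odd; $\mathrm{Od}(n):=1$ if $o\equiv 1\pmod 4$ and $\mathrm{Od}(n):=-1$ if $o\equiv 3\pmod 4$. If $n$ has binary expansion $n=\sum_{i\ge0}b_i2^i$ ($b_i\in\{0,1\}$), then $\nu(n):=\sum_i b_i$ (with $\nu(0)=0$), and $D(n)$ is the number of indices $i$ with $b_ib_{i+1}=1$ (the number of, possibly overlapping, pairs of adjacent $1$s). *)

From mathcomp Require Import all_boot all_algebra.
Set Implicit Arguments. Unset Strict Implicit. Unset Printing Implicit Defensive.
Import GRing.Theory.

Definition bit (n i : nat) : bool := odd (n %/ 2 ^ i).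

Definition oddpart (n : nat) : nat := n %/ 2 ^ (logn 2 n).

Definition Od (n : nat) : int := if oddpart n %% 4 == 1 then 1%R else (-1)%R.

(* nu(n) = number of 1 bits; all bits of index >= n are 0 (n < 2^n) *)
Definition nu (n : nat) : nat := \sum_(i < n.+1) bit n i.

Definition D (n : nat) : nat := \sum_(i < n.+1) (bit n i && bit n i.+1).

From mathcomp Require Import all_boot all_algebra.
From mathcomp Require Import zify.
Import GRing.Theory.

(* 1. Od is a multiplicative sign: the odd part is multiplicative, so
      Od(ab) = Od(a) Od(b); moreover Od(2) = 1 and Od(k) is read off k mod 4
      for odd k.
   2. Splitting off the lowest binary digit gives the recursions
      nu(n) = b_0 + nu(n/2) and D(n) = [b_0 b_1 = 1] + D(n/2).
   3. Sorting the factors 1..n of n! into odd k and even k = 2j, and using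
      Od(2j) = Od(j), gives Od(n!) = (-1)^(#{k <= n | k = 3 mod 4}) Od((n/2)!),
      and that count is (n+1)/4.
   4. Since (n+1)/4 = n/4 + [n = 3 mod 4] and [n = 3 mod 4] = [b_0 b_1 = 1],
      the exponents of step 3 and of the induction hypothesis for n/2 add up,
      modulo 2, to D(n) + nu(n/4) by the recursions of step 2.
   The identity also holds for n = 0. *)

Lemma oddpart_spec {a : nat} : 0 < a ->
  odd (oddpart a) /\ a = oddpart a * 2 ^ logn 2 a.
Proof.
move=> a_gt0; have [m m_odd a_eq] := pfactor_coprime (isT : prime 2) a_gt0.
have -> : oddpart a = m by rewrite /oddpart {1}a_eq mulnK // expn_gt0.
by rewrite -coprime2n.
Qed.

Lemma oddpartM (a b : nat) : 0 < a -> 0 < b ->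
  oddpart (a * b) = oddpart a * oddpart b.
Proof.
move=> a_gt0 b_gt0.
have [_ a_eq] := oddpart_spec a_gt0; have [_ b_eq] := oddpart_spec b_gt0.
have ab_eq : a * b = (oddpart a * oddpart b) * (2 ^ logn 2 a * 2 ^ logn 2 b).
  by rewrite mulnACA -a_eq -b_eq.
by rewrite {1}/oddpart lognM // expnD ab_eq mulnK // muln_gt0 !expn_gt0.
Qed.

Lemma odd_mod4 {x : nat} : odd x -> x %% 4 = 1 \/ x %% 4 = 3.
Proof.
move=> x_odd; have : odd (x %% 4) by rewrite odd_mod.
have : x %% 4 < 4 by rewrite ltn_mod.
by case: (x %% 4) => [|[|[|[|]]]] //; auto.
Qed.

Local Open Scope ring_scope.

(* Od is multiplicative, since residues 1 and 3 mod 4 multiply like signs. *)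
Lemma OdM (a b : nat) : (0 < a)%N -> (0 < b)%N -> Od (a * b) = Od a * Od b.
Proof.
move=> a_gt0 b_gt0; rewrite /Od oddpartM // -modnMm.
have [a_odd _] := oddpart_spec a_gt0; have [b_odd _] := oddpart_spec b_gt0.
by case: (odd_mod4 a_odd) => ->; case: (odd_mod4 b_odd) => ->.
Qed.

Lemma Od2 : Od 2 = 1.
Proof. by rewrite /Od /oddpart (@logn_prime 2 2). Qed.

(* An odd number is its own odd part. *)
Lemma Od_odd (k : nat) : odd k -> Od k = if (k %% 4 == 1)%N then 1 else -1.
Proof.
move=> k_odd; rewrite /Od /oddpart.
by rewrite (@logn_coprime 2 k) ?coprime2n // expn0 divn1.
Qed.

(* Passing from n! to (n+1)! multiplies by Od(n+1); the sign counter
   (n+1)/4 grows exactly when n+1 = 3 mod 4, and the factorial (n/2)!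
   grows exactly when n+1 is even, by the factor n+1 = 2 * ((n+1)/2). *)
Lemma Od_fact_rec (n : nat) :
  Od (n `!) = (-1) ^+ (n.+1 %/ 4) * Od ((n %/ 2) `!).
Proof.
elim: n => [|n IH]; first by rewrite expr0 mul1r.
rewrite factS OdM ?fact_gt0 // IH.
have [n_odd | n_even] := boolP (odd n).
- set k := (n.+1 %/ 2)%N.
  have k_gt0 : (0 < k)%N by rewrite /k; lia.
  have n1_eq : n.+1 = (k * 2)%N by rewrite /k; lia.
  have -> : (n %/ 2 = k.-1)%N by rewrite /k; lia.
  have -> : (n.+2 %/ 4 = n.+1 %/ 4)%N by lia.
  have k_fact : k`! = (k * k.-1`!)%N by rewrite -{1}(prednK k_gt0) factS prednK.
  rewrite n1_eq OdM // Od2 mulr1 k_fact OdM ?fact_gt0 //.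
  by rewrite mulrA mulrA [Od k * _]mulrC.
- have -> : (n.+1 %/ 2 = n %/ 2)%N by lia.
  rewrite Od_odd //= mulrA; congr (_ * _).
  have [n1_mod4 | n1_mod4] := eqVneq (n.+1 %% 4)%N 1%N.
  + have -> : (n.+2 %/ 4 = n.+1 %/ 4)%N by lia.
    by rewrite mul1r.
  + have -> : (n.+2 %/ 4 = (n.+1 %/ 4).+1)%N by lia.
    by rewrite exprS.
Qed.

Local Close Scope ring_scope.

Lemma bitS (n i : nat) : bit n i.+1 = bit (n %/ 2) i.
Proof. by rewrite /bit expnS divnMA. Qed.

Lemma bit0 (n : nat) : bit n 0 = odd n.
Proof. by rewrite /bit expn0 divn1. Qed.

Lemma bit_big (n i : nat) : n < i -> bit n i = false.
Proof.
by move=> n_lt_i; rewrite /bit divn_small // (ltn_trans n_lt_i) // ltn_expl.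
Qed.

(* A digit statistic F, i.e. one vanishing beyond position n, may be summed
   over any range of positions covering 0..n; this lets nu and D be computed
   with a range adapted to n/2. *)
Lemma sum_digits_widen (n k : nat) (F : nat -> nat) :
  (forall i, n < i -> F i = 0) -> n < k ->
  \sum_(i < k) F i = \sum_(i < n.+1) F i.
Proof.
move=> F_big; elim: k => [//|k IH].
rewrite ltnS leq_eqVlt => /orP [/eqP -> //| n_lt_k].
by rewrite big_ord_recr /= IH // F_big // addn0.
Qed.

Lemma nu_widen (n k : nat) : n < k -> \sum_(i < k) bit n i = nu n.
Proof. by rewrite /nu; apply: (@sum_digits_widen n k (bit n)) => i /bit_big ->.
Qed.

Lemma D_widen (n k : nat) : n < k -> \sum_(i < k) (bit n i && bit n i.+1) = D n.
Proof.
rewrite /D; apply: (@sum_digits_widen n k (fun i => bit n i && bit n i.+1)).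
by move=> i /bit_big ->.
Qed.

Lemma nu_rec (n : nat) : nu n = odd n + nu (n %/ 2).
Proof.
rewrite -(@nu_widen n n.+2) // big_ord_recl bit0; congr (_ + _).
under eq_bigr => i _ do rewrite /bump /= bitS.
by apply: nu_widen; rewrite ltnS leq_div.
Qed.

Lemma D_rec (n : nat) : D n = (odd n && odd (n %/ 2)) + D (n %/ 2).
Proof.
rewrite -(@D_widen n n.+2) // big_ord_recl bit0 bitS bit0; congr (_ + _).
under eq_bigr => i _ do rewrite /bump /= [bit n i.+1]bitS [bit n i.+2]bitS.
by apply: D_widen; rewrite ltnS leq_div.
Qed.

(* n + 1 = 0 mod 4 exactly when the two lowest digits of n are 1. *)
Lemma div4S (n : nat) : n.+1 %/ 4 = n %/ 4 + (odd n && odd (n %/ 2)).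
Proof. lia. Qed.

(* The exponent of Od_fact_rec plus the exponent for n/2 has the parity
   of the exponent for n. *)
Lemma exponent_rec (n : nat) :
  odd (n.+1 %/ 4 + (D (n %/ 2) + nu (n %/ 2 %/ 4))) = odd (D n + nu (n %/ 4)).
Proof.
have div_comm : n %/ 4 %/ 2 = n %/ 2 %/ 4 by rewrite -!divnMA mulnC.
rewrite div4S (D_rec n) (nu_rec (n %/ 4)) div_comm !oddD !oddb.
by case: odd; case: (_ && _); case: odd; case: odd.
Qed.

Local Open Scope ring_scope.

Theorem lemma3p1 (n : nat) : (1 <= n)%N ->
  Od (n `!) = (-1) ^+ (D n + nu (n %/ 4))%N :> int.
Proof.
move=> _; elim/ltn_ind: n => -[|n] IH; first by rewrite /D /nu !big_ord1.
rewrite Od_fact_rec IH ?ltn_Pdiv // -exprD.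
by rewrite -signr_odd exponent_rec signr_odd.
Qed.
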